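(* Let $0<\mu<1$, $e=(1-\mu,0)$, $s=(-\mu,0)$ and $$V(q)=-\frac{\mu}{|q-e|}-\frac{1-\mu}{|q-s|}-\frac12|q|^2,\qquad q\in\mathbb{R}^2\setminus\{e,s\}.$$ Let $\ell_2,\ell_3$ be the collinear Lagrange points defined in the context, and let $c<\min\{V(\ell_2),V(\ell_3)\}$. Then the set of points $q$ in the bounded Hill's region $\mathfrak{K}_c^b$ at which $\frac{\partial V}{\partial q_2}(q)=0$ is exactly $\mathfrak{K}_c^b\cap\{q_2=0\}$.
   Context: The function $u(x)=V(x,0)$ is strictly concave on each of the intervals $(-\infty,-\mu)$, $(-\mu,1-\mu)$, $(1-\mu,\infty)$ and tends to $-\infty$ at their endpoints. Its unique maxima on these intervals are denoted $\ell_3<-\mu$, $\ell_1\in(-\mu,1-\mu)$ and $\ell_2>1-\mu$ (as points $(\ell_i,0)$). They are critical points of $V$ with $V(\ell_1)<V(\ell_2)$ and $V(\ell_1)<V(\ell_3)$. The Hill's region is $\mathfrak{K}_c=\{q\in\mathbb{R}^2\setminus\{e,s\}:V(q)\le c\}$. For $c<\min\{V(\ell_2),V(\ell_3)\}$ it consists of one unbounded connected component and a bounded part $\mathfrak{K}_c^b$, the union of the bounded components. This bounded part is a single component containing $e,s$ in its closure if $c\ge V(\ell_1)$, and two components, one around each primary, if $c<V(\ell_1)$. *)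

From HB Require Import structures.
From mathcomp Require Import all_boot all_order all_algebra.
From mathcomp Require Import all_classical all_reals all_analysis.
Set Implicit Arguments. Unset Strict Implicit. Unset Printing Implicit Defensive.
Import Order.TTheory GRing.Theory Num.Theory.
Local Open Scope classical_set_scope.
Local Open Scope ring_scope.

Section Defs.
Variable R : realType.

Definition prim_e (mu : R) : R * R := (1 - mu, 0).
Definition prim_s (mu : R) : R * R := (- mu, 0).

Definition enorm (q : R * R) : R := Num.sqrt (q.1 ^+ 2 + q.2 ^+ 2).

Definition dist2 (p q : R * R) : R := enorm (p.1 - q.1, p.2 - q.2).

Definition V (mu : R) (q : R * R) : R :=
  - mu / dist2 q (prim_e mu) - (1 - mu) / dist2 q (prim_s mu)
  - 2^-1 * (enorm q) ^+ 2.

Definition u (mu : R) (x : R) : R := V mu (x, 0).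

Definition hill (mu c : R) : set (R * R) :=
  [set q | q <> prim_e mu /\ q <> prim_s mu /\ V mu q <= c].

Definition bounded2 (A : set (R * R)) : Prop :=
  exists M : R, forall p, A p -> `|p.1| <= M /\ `|p.2| <= M.

Definition hill_bounded (mu c : R) : set (R * R) :=
  [set q | hill mu c q /\ bounded2 (@connected_component (prod R^o R^o) (hill mu c) q)].

Definition dV_dq2 (mu : R) (q : R * R) : R :=
  derive1 (fun t : R => V mu (q.1, t)) q.2.

Definition is_l2 (mu l2 : R) : Prop :=
  1 - mu < l2 /\ forall x, 1 - mu < x -> u mu x <= u mu l2.

Definition is_l3 (mu l3 : R) : Prop :=
  l3 < - mu /\ forall x, x < - mu -> u mu x <= u mu l3.

End Defs.

From HB Require Import structures.
From mathcomp Require Import all_boot all_order all_algebra.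
From mathcomp Require Import all_classical all_reals all_analysis.
From mathcomp Require Import ring lra.
Set Implicit Arguments. Unset Strict Implicit. Unset Printing Implicit Defensive.
Import Order.TTheory GRing.Theory Num.Theory.
Local Open Scope classical_set_scope.
Local Open Scope ring_scope.

(* On a vertical line q_1 = x, with r_e, r_s the distances to the primaries,
   dV/dq_2 = q_2 (mu/r_e^3 + (1-mu)/r_s^3 - 1), and V is a concave function of
   w = q_2^2 whose w-derivative is half the bracket.  So if dV/dq_2 vanishes at
   a point with q_2 <> 0, the bracket vanishes there, V attains its maximum
   over the line at that point, and the whole vertical ray beyond it lies in
   the Hill's region.  The ray is connected and unbounded, so the point cannot
   lie in a bounded component.  Conversely dV/dq_2 vanishes on q_2 = 0 away
   from the primaries. *)

Section Kepler.
Variable R : realType.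

Lemma is_derive_add_sqr (a t : R) : is_derive t 1 (fun s : R => a + s ^+ 2) (2 * t).
Proof.
apply: is_derive_eq; rewrite add0r mul1r.
by change (t * 1 + t * 1 = 2 * t); rewrite mulr1 -mulr2n mulr_natl.
Qed.

Lemma is_derive_half_add_sqr (a t : R) :
  is_derive t 1 (fun s : R => 2^-1 * (a + s ^+ 2)) t.
Proof.
refine (is_derive_eq (is_deriveZ 2^-1 (is_derive_add_sqr a t)) _).
by change (2^-1 * (2 * t) = t); rewrite mulrA mulVf ?mul1r ?pnatr_eq0.
Qed.

(* [kepler m a t] is m / r, where r is the distance from (x, t) to a mass m
   placed at (x', 0) and a = (x - x')^2. *)
Definition kepler (m a t : R) : R := m / Num.sqrt (a + t ^+ 2).

Definition kepler3 (m a t : R) : R := m / Num.sqrt (a + t ^+ 2) ^+ 3.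

Lemma is_derive_kepler (m a t : R) : 0 < a + t ^+ 2 ->
  is_derive t 1 (kepler m a) (- t * kepler3 m a t).
Proof.
move=> at_gt0; set r := Num.sqrt (a + t ^+ 2).
have r_neq0 : r != 0 by rewrite gt_eqF // sqrtr_gt0.
have dsqrt := is_derive1_comp (g := fun s : R => a + s ^+ 2)
  (is_derive1_sqrt at_gt0) (is_derive_add_sqr a t).
have dinv := is_deriveV (f := Num.sqrt \o (fun s : R => a + s ^+ 2)) r_neq0 dsqrt.
refine (is_derive_eq (is_deriveZ m dinv) _).
change (m * (- r ^- 2 * ((2 * r)^-1 * (2 * t))) = - t * (m / r ^+ 3)).
by field.
Qed.

(* The tangent line of the convex map w |-> w^(-1/2) at w = r0^2. *)
Lemma invr_tangent (r0 r : R) : 0 < r0 -> 0 < r ->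
  r0^-1 - r^-1 <= (r ^+ 2 - r0 ^+ 2) / (2 * r0 ^+ 3).
Proof.
move=> r0_gt0 r_gt0.
have -> : r0^-1 - r^-1 = (r ^+ 2 - r0 ^+ 2) / (2 * r0 ^+ 3)
    - (r - r0) ^+ 2 * (r + 2 * r0) / (2 * r0 ^+ 3 * r).
  by field; rewrite !(gt_eqF, expf_neq0).
have [r0_ge0 r_ge0] := (ltW r0_gt0, ltW r_gt0).
rewrite gerBl; apply: divr_ge0; last by rewrite !mulr_ge0 // exprn_ge0.
by rewrite mulr_ge0 ?sqr_ge0 // addr_ge0 // mulr_ge0.
Qed.

Lemma kepler_tangent (m a t0 t : R) : 0 <= m ->
  0 < a + t0 ^+ 2 -> 0 < a + t ^+ 2 ->
  kepler m a t0 - kepler m a t <= (t ^+ 2 - t0 ^+ 2) / 2 * kepler3 m a t0.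
Proof.
move=> m_ge0 at0_gt0 at_gt0; rewrite /kepler /kepler3.
set r0 := Num.sqrt (a + t0 ^+ 2); set r := Num.sqrt (a + t ^+ 2).
have r0_gt0 : 0 < r0 by rewrite sqrtr_gt0.
have r_gt0 : 0 < r by rewrite sqrtr_gt0.
have := ler_wpM2l m_ge0 (invr_tangent r0_gt0 r_gt0).
have -> : r ^+ 2 - r0 ^+ 2 = t ^+ 2 - t0 ^+ 2.
  by rewrite !sqr_sqrtr ?ltW //; ring.
have -> : (t ^+ 2 - t0 ^+ 2) / 2 * (m / r0 ^+ 3)
    = m * ((t ^+ 2 - t0 ^+ 2) / (2 * r0 ^+ 3)).
  by field; rewrite gt_eqF.
by rewrite mulrBr.
Qed.
End Kepler.

Section VerticalLines.
Variable R : realType.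
Implicit Types (mu x t a : R).

Lemma sqr_dist_gt0 x t a : (x, t) <> (a, 0) -> 0 < (x - a) ^+ 2 + t ^+ 2.
Proof.
move=> neq; rewrite lt_def addr_ge0 ?sqr_ge0 // andbT.
rewrite paddr_eq0 ?sqr_ge0 // !sqrf_eq0 subr_eq0.
by apply/negP => /andP[/eqP xa /eqP t0]; apply: neq; rewrite xa t0.
Qed.

Lemma V_pairE mu x t : V mu (x, t) = - kepler mu ((x - (1 - mu)) ^+ 2) t
  - kepler (1 - mu) ((x + mu) ^+ 2) t - 2^-1 * (x ^+ 2 + t ^+ 2).
Proof.
rewrite /V /dist2 /enorm /kepler /prim_e /prim_s /= !subr0 opprK !mulNr.
by rewrite sqr_sqrtr // addr_ge0 ?sqr_ge0.
Qed.

Definition dV_dq2_factor mu x t : R :=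
  kepler3 mu ((x - (1 - mu)) ^+ 2) t + kepler3 (1 - mu) ((x + mu) ^+ 2) t - 1.

Lemma dV_dq2E mu x t : (x, t) <> prim_e mu -> (x, t) <> prim_s mu ->
  dV_dq2 mu (x, t) = t * dV_dq2_factor mu x t.
Proof.
move=> /sqr_dist_gt0 de /sqr_dist_gt0; rewrite opprK => ds.
have dke := is_derive_kepler mu de; have dks := is_derive_kepler (1 - mu) ds.
rewrite /dV_dq2 derive1E /=.
under eq_fun do rewrite V_pairE.
apply: derive_val.
have dq := is_derive_half_add_sqr (x ^+ 2) t.
apply: is_derive_eq; rewrite /dV_dq2_factor; ring.
Qed.

Lemma V_le_tangent mu x t0 t : 0 <= mu <= 1 ->
  (x, t0) <> prim_e mu -> (x, t0) <> prim_s mu ->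
  (x, t) <> prim_e mu -> (x, t) <> prim_s mu ->
  V mu (x, t) <= V mu (x, t0) + (t ^+ 2 - t0 ^+ 2) / 2 * dV_dq2_factor mu x t0.
Proof.
case/andP=> mu_ge0 mu_le1 /sqr_dist_gt0 de0 /sqr_dist_gt0 + /sqr_dist_gt0 de.
rewrite opprK => ds0 /sqr_dist_gt0; rewrite opprK => ds.
have := kepler_tangent mu_ge0 de0 de.
have mu'_ge0 : 0 <= 1 - mu by rewrite subr_ge0.
have := kepler_tangent mu'_ge0 ds0 ds.
rewrite !V_pairE /dV_dq2_factor; lra.
Qed.

Lemma hill_vertical_ray mu c x y : 0 <= mu <= 1 -> hill mu c (x, y) ->
  y != 0 -> dV_dq2 mu (x, y) = 0 -> forall s, 1 <= s -> hill mu c (x, y * s).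
Proof.
move=> mu01 [xy_e [xy_s Vxy]] y_neq0 dV0 s s_ge1.
have factor0 : dV_dq2_factor mu x y = 0.
  apply/eqP; move: dV0; rewrite dV_dq2E // => /eqP.
  by rewrite mulf_eq0 (negPf y_neq0).
have ys_neq0 : y * s != 0 by rewrite mulf_neq0 // gt_eqF // (lt_le_trans ltr01).
have off_axis a : (x, y * s) <> (a, 0) by case=> _ /eqP; rewrite (negPf ys_neq0).
split; [exact: off_axis | split; [exact: off_axis | apply: le_trans Vxy]].
have := V_le_tangent mu01 xy_e xy_s (off_axis _) (off_axis _).
by rewrite factor0 mulr0 addr0.
Qed.

End VerticalLines.

Lemma connected_component_vertical_ray (R : realType) (A : set (R * R)) x y :
  y != 0 -> (forall s, 1 <= s -> A (x, y * s)) ->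
  ~ bounded2 (@connected_component (prod R^o R^o) A (x, y)).
Proof.
move=> y_neq0 rayA [M bounded].
pose f (s : R^o) : prod R^o R^o := (x, y * s).
pose ray := f @` [set` `[(1 : R), +oo[%R].
have f_cont : continuous f.
  by move=> s; exact: (cvg_pair (cvg_cst _) (@mulrl_continuous R y s)).
have ray_conn : connected ray.
  apply: (connected_continuous_connected _ (continuous_subspaceT f_cont)).
  exact/connected_intervalP/interval_is_interval.
have ray_sub : ray `<=` @connected_component (prod R^o R^o) A (x, y).
  apply: connected_component_max ray_conn.
  - by exists 1; rewrite /= ?in_itv /= ?lexx // /f mulr1.
  - by move=> p [s]; rewrite /= in_itv /= andbT => s_ge1 <-; exact: rayA.
pose s := 1 + `|M| / `|y|.
have y_gt0 : 0 < `|y| by rewrite normr_gt0.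
have s_ge1 : 1 <= s by rewrite lerDl divr_ge0.
have ray_s : ray (x, y * s) by exists s; rewrite //= in_itv /= andbT.
have [_ /=] := bounded _ (ray_sub _ ray_s).
rewrite normrM (ger0_norm (le_trans ler01 s_ge1)) mulrDr mulr1 mulrCA.
rewrite divff ?gt_eqF // mulr1; have := ler_norm M; lra.
Qed.

Theorem lemma5p1 (R : realType) (mu l2 l3 c : R)
  (hmu0 : 0 < mu) (hmu1 : mu < 1)
  (hl2 : is_l2 mu l2) (hl3 : is_l3 mu l3)
  (hc : c < Num.min (V mu (l2, 0)) (V mu (l3, 0))) :
  [set q | hill_bounded mu c q /\ dV_dq2 mu q = 0]
  = [set q | hill_bounded mu c q /\ q.2 = 0].
Proof.
have mu01 : 0 <= mu <= 1 by rewrite !ltW.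
apply/seteqP; split=> -[x y] /= [hq h]; split=> //; case: hq => hill_xy bounded_xy.
- have [// | y_neq0] := eqVneq y 0.
  have ray := hill_vertical_ray mu01 hill_xy y_neq0 h.
  by have := connected_component_vertical_ray y_neq0 ray.
- case: hill_xy => xy_e [xy_s _].
  by rewrite dV_dq2E // h mul0r.
Qed.
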